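(* Let $T$ be a tree such that the longest $2$-path in $T$ has length $d\ge1$, and let $k$ be a positive integer. Then there exists $L>0$ (depending only on $k$ and $d$) such that the following holds: if $T$ contains a $\mathrm{C}$-gadget of order $d$ and length $L$, then there exists $1\le d'\le d$ such that $T$ contains a closed strong $\mathrm{C}$-gadget of order $d'$ with at least $k$ junctions.
   Context: In a tree $T$: a $2$-path of length $a$ is a path $x_0,\dots,x_a$ with $\deg(x_0)\ne2$, $\deg(x_1)=\dots=\deg(x_{a-1})=2$, $\deg(x_a)\ne 2$. A source is a vertex of degree $>2$. A ray of length $a$ is a $2$-path $x_0,\dots,x_a$ with $\deg(x_0)>2$, $\deg(x_a)=1$; $x_0$ is its source. For a source $s$, let $\deg_{\mathcal{L}}^a(s)$ be the number of rays of length $a$ with source $s$ and $\deg_{\overline{\mathcal{L}}}(s)=\deg(s)-\sum_a\deg_{\mathcal{L}}^a(s)$; $s$ is a fork if $\deg_{\overline{\mathcal{L}}}(s)=1$ and there are positive integers $a,b$ with either $a\ne b$ and $\deg^a_{\mathcal{L}}(s),\deg^b_{\mathcal{L}}(s)>0$, or $a=b$ and $\deg^a_{\mathcal{L}}(s)>1$. A $\mathrm{C}$-gadget of order $d$ and length $k$ is a path $x_0,\dots,x_k$ such that each inner vertex $x_i$ either has degree $2$ or is a source such that every neighbour of $x_i$ other than $x_{i-1},x_{i+1}$ is contained in a ray of length at most $d$ from $x_i$ to a leaf. A $\mathrm{C}$-gadget $x_0,\dots,x_L$ of order $d$ is a strong $\mathrm{C}$-gadget with $k$ junctions if there are integers $0=i_0<i_1<\dots<i_k<i_{k+1}=L$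 with $i_{j+1}-i_j>2d$ for all $j\in\{0,\dots,k\}$ and, for all $j\in\{1,\dots,k\}$, $x_{i_j}$ is the source of a ray of length $d$ containing neither $x_{i_j-1}$ nor $x_{i_j+1}$; $x_{i_1},\dots,x_{i_k}$ are the junctions. It is closed if neither $x_{i_1}$ nor $x_{i_k}$ is a fork. *)

From mathcomp Require Import all_boot.
Set Implicit Arguments. Unset Strict Implicit. Unset Printing Implicit Defensive.

Section Trees.
Variables (V : finType) (e : rel V).

Definition deg (x : V) : nat := #|[set y | e x y]|.

Definition gpath (x : nat -> V) (n : nat) : bool :=
  [forall i : 'I_n, e (x i) (x i.+1)] &&
  [forall i : 'I_n.+1, forall j : 'I_n.+1, (x i == x j) ==> (i == j :> nat)].

Definition is_tree : Prop :=
  symmetric e /\ irreflexive e /\ (forall x y, connect e x y) /\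
  (forall (x : nat -> V) (n : nat), 2 <= n -> gpath x n -> ~~ e (x n) (x 0)).

Definition two_path (x : nat -> V) (a : nat) : bool :=
  [&& gpath x a, 0 < a, deg (x 0) != 2, deg (x a) != 2 &
      [forall i : 'I_a, (0 < i) ==> (deg (x i) == 2)]].

Definition is_source (s : V) : bool := 2 < deg s.

Definition is_ray (x : nat -> V) (a : nat) : bool :=
  [&& two_path x a, is_source (x 0) & deg (x a) == 1].

Definition tfun n (t : n.+1.-tuple V) : nat -> V := fun i => nth (thead t) t i.

(* number of rays of length a with source s (rays are (a+1)-tuples of vertices) *)
Definition degL (s : V) (a : nat) : nat :=
  #|[set t : (a.+1).-tuple V | is_ray (tfun t) a && (tfun t 0 == s)]|.

(* rays have length < #|V| (they consist of distinct vertices) *)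
Definition degLbar (s : V) : nat := deg s - \sum_(a < #|V|) degL s a.

Definition is_fork (s : V) : Prop :=
  is_source s /\ degLbar s = 1 /\
  exists a b, 0 < a /\ 0 < b /\
    ((a <> b /\ 0 < degL s a /\ 0 < degL s b) \/ (a = b /\ 1 < degL s a)).

Definition longest_2path (d : nat) : Prop :=
  (exists x, two_path x d) /\ (forall x a, two_path x a -> a <= d).

Definition c_gadget (d : nat) (x : nat -> V) (k : nat) : Prop :=
  gpath x k /\
  forall i, 0 < i -> i < k ->
    deg (x i) = 2 \/
    (is_source (x i) /\
     forall y, e (x i) y -> y <> x i.-1 -> y <> x i.+1 ->
       exists (r : nat -> V) (a : nat),
         a <= d /\ is_ray r a /\ r 0 = x i /\ exists m, m <= a /\ r m = y).

(* x 0, ..., x L is a strong C-gadget of order d with k junctions, witnessed by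
   indices idx 0 = 0 < idx 1 < ... < idx k < idx (k+1) = L *)
Definition strong_c_gadget (d : nat) (x : nat -> V) (L k : nat) (idx : nat -> nat) : Prop :=
  c_gadget d x L /\ idx 0 = 0 /\ idx k.+1 = L /\
  (forall j, j <= k -> idx j < idx j.+1 /\ 2 * d < idx j.+1 - idx j) /\
  (forall j, 1 <= j -> j <= k ->
     exists r : nat -> V, is_ray r d /\ r 0 = x (idx j) /\
       forall m, m <= d -> r m <> x (idx j).-1 /\ r m <> x (idx j).+1).

Definition closed_strong_c_gadget (d : nat) (x : nat -> V) (L k : nat) (idx : nat -> nat) : Prop :=
  strong_c_gadget d x L k idx /\ ~ is_fork (x (idx 1)) /\ ~ is_fork (x (idx k)).

End Trees.

From mathcomp Require Import all_boot zify.
From Stdlib Require Import ClassicalEpsilon.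
Set Implicit Arguments. Unset Strict Implicit. Unset Printing Implicit Defensive.

(* Call an inner vertex of a C-gadget t-bounded when its side branches are rays
   of length at most t, and induct on t.  A 0-bounded gadget has inner degree 2,
   hence length at most d.  A gadget of order t+1 and length (k+1)(2d + N_t)
   either contains a window of length N_t that is a gadget of order t, or every
   such window contains a junction, i.e. a vertex with a side ray of length
   exactly t+1; picking k junctions greedily with gaps over 2d gives a strong
   gadget of order t+1.  Its junctions lie at distance over d from both ends, and
   within distance d along the gadget in each direction there is a vertex of
   degree at least 3 (otherwise some 2-path is longer than d).  So neither gadget
   edge at a junction starts a ray, at least two branches of the junction are not
   rays, and it is not a fork. *)

Lemma eq_from_tfun (T : finType) n (t t' : n.+1.-tuple T) :
  (forall j, j <= n -> tfun t j = tfun t' j) -> t = t'.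
Proof.
move=> eq_tt'; apply: val_inj; apply: (@eq_from_nth _ (thead t)).
  by rewrite !size_tuple.
move=> i; rewrite size_tuple ltnS => le_in.
rewrite [LHS](eq_tt' i le_in) /tfun.
by apply: set_nth_default; rewrite size_tuple ltnS.
Qed.

Lemma card_bigcup_ord_disjoint (T : finType) K (F : nat -> {set T}) :
  (forall a b, a != b -> [disjoint F a & F b]) ->
  #|\bigcup_(a < K) F a| = \sum_(a < K) #|F a|.
Proof.
move=> disjF; elim: K => [|K IH]; first by rewrite !big_ord0 cards0.
rewrite !big_ord_recr /= -IH.
have : [disjoint \bigcup_(a < K) F a & F K].
  rewrite disjoint_sym; apply: bigcup_disjoint => a _; apply: disjF.
  by rewrite neq_ltn ltn_ord orbT.
by rewrite -(leq_card_setU (\bigcup_(a < K) F a) (F K)).2 => /eqP.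
Qed.

Lemma spaced_hits (P : nat -> Prop) (G M k n : nat) :
  0 < M -> k.+1 * (G + M) <= n ->
  (forall q, q + M <= n -> exists2 i, q < i < q + M & P i) ->
  exists idx : nat -> nat, [/\ idx 0 = 0, idx k.+1 = n,
    forall l, l <= k -> idx l + G < idx l.+1 &
    forall l, 0 < l <= k -> P (idx l)].
Proof.
rewrite mulSn => M_gt0 kn hit.
have [f hf] : exists f : nat -> nat,
    forall q, q + M <= n -> q < f q < q + M /\ P (f q).
  apply: (choice (fun q i => q + M <= n -> q < i < q + M /\ P i)) => q.
  case: (leqP (q + M) n) => [/hit [i qi Pi]|qn]; first by exists i.
  by exists 0; lia.
pose g l := iter l (fun i => f (i + G)) 0.
have g_le l : l <= k -> g l <= l * (G + M).
  elim: l => [|l IH] lk //=; have := IH (ltnW lk).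
  have := leq_mul lk (leqnn (G + M)); rewrite mulSn => lkGM gl.
  by have [+ _] := hf (g l + G) ltac:(lia); lia.
have g_step l : l < k -> g l + G < g l.+1 /\ P (g l.+1).
  move=> lk; have := g_le l (ltnW lk).
  have := leq_mul lk (leqnn (G + M)); rewrite mulSn => lkGM gl.
  rewrite [g l.+1]/=; have [+ ?] := hf (g l + G) ltac:(lia).
  by split => //; lia.
exists (fun l => if l == k.+1 then n else g l); split => [||l lk|l /andP [l0 lk]].
- by [].
- by rewrite eqxx.
- rewrite eqSS (_ : (l == k.+1) = false); last by apply/eqP; lia.
  case: eqP => [->|/eqP lk']; last exact: (g_step l ltac:(lia)).1.
  by have := g_le k (leqnn k); lia.
- rewrite (_ : (l == k.+1) = false); last by apply/eqP; lia.
  by case: l l0 lk => // l _ lk; exact: (g_step l lk).2.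
Qed.

Fixpoint gadget_length (d k t : nat) : nat :=
  if t is t'.+1 then k.+1 * (2 * d + gadget_length d k t') else d.+1.

Lemma gadget_length_gt0 d k t : 0 < gadget_length d k t.
Proof. by elim: t => //= t IH; rewrite muln_gt0 addn_gt0 IH orbT. Qed.

Section Tree.
Variables (V : finType) (e : rel V).
Hypothesis e_sym : symmetric e.
Hypothesis e_irr : irreflexive e.
Hypothesis e_acyc :
  forall (x : nat -> V) n, 2 <= n -> gpath e x n -> ~~ e (x n) (x 0).

Lemma gpath_edge x n i : gpath e x n -> i < n -> e (x i) (x i.+1).
Proof. by case/andP => /forallP edges _ lt_in; exact: (edges (Ordinal lt_in)). Qed.

Lemma gpath_inj x n i j : gpath e x n -> i <= n -> j <= n -> x i = x j -> i = j.
Proof.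
case/andP => _ /forallP inj; rewrite -ltnS => lt_i; rewrite -ltnS => lt_j eq_ij.
move: (inj (Ordinal lt_i)) => /forallP /(_ (Ordinal lt_j)) /implyP /=.
by rewrite eq_ij eqxx => /(_ isT) /eqP.
Qed.

Lemma gpathP x n : (forall i, i < n -> e (x i) (x i.+1)) ->
  (forall i j, i <= n -> j <= n -> x i = x j -> i = j) -> gpath e x n.
Proof.
move=> edges inj; apply/andP; split; apply/forallP => i; first exact: edges.
apply/forallP => j; apply/implyP => /eqP eq_ij; apply/eqP.
by apply: inj; rewrite // -ltnS.
Qed.

Lemma gpath_shift x n p m : gpath e x n -> p + m <= n ->
  gpath e (fun i => x (p + i)) m.
Proof.
move=> g pmn; apply: gpathP => [i lt_im|i j le_im le_jm /(gpath_inj g)].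
  by rewrite addnS; apply: (gpath_edge g); lia.
by move=> /(_ ltac:(lia) ltac:(lia)); lia.
Qed.

Lemma gpath_prefix x n m : gpath e x n -> m <= n -> gpath e x m.
Proof.
move=> g mn; apply: gpathP => [i lt_im|i j le_im le_jm /(gpath_inj g)].
  by apply: (gpath_edge g); lia.
by apply; lia.
Qed.

Lemma gpath_rev x n : gpath e x n -> gpath e (fun i => x (n - i)) n.
Proof.
move=> g; apply: gpathP => [i lt_in|i j le_in le_jn /(gpath_inj g)].
  rewrite e_sym (_ : n - i = (n - i.+1).+1); last by lia.
  by apply: (gpath_edge g); lia.
by move=> /(_ ltac:(lia) ltac:(lia)); lia.
Qed.

Lemma gpath_lt_card x n : gpath e x n -> n < #|V|.
Proof.
move=> g; have x_inj : injective (fun i : 'I_n.+1 => x i).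
  by move=> i j /(gpath_inj g) eq_ij; apply/ord_inj/eq_ij; rewrite -ltnS.
by have := leq_card _ x_inj; rewrite card_ord.
Qed.

Lemma gpath_nbr_head x n y m :
  gpath e x n -> e (x 0) y -> m <= n -> x m = y -> m = 1.
Proof.
move=> g e0y mn xm; case: m mn xm => [|[|m]] mn xm //.
  by move: e0y; rewrite -xm e_irr.
have := e_acyc (isT : 1 < m.+2) (gpath_prefix g mn).
by rewrite xm e_sym e0y.
Qed.

Lemma gpath_avoid_nbr x n y :
  gpath e x n -> e (x 0) y -> x 1 <> y -> forall m, m <= n -> x m <> y.
Proof. by move=> g e0y x1y m mn xm; move: x1y; rewrite -(gpath_nbr_head g e0y mn xm). Qed.

Lemma card_nbrD2 v u w : e v u -> e v w -> u != w ->
  #|[set y | e v y] :\ u :\ w| + 2 = deg e v.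
Proof.
move=> evu evw uw; rewrite /deg (cardsD1 u [set y | e v y]).
by rewrite (cardsD1 w ([set y | e v y] :\ u)) !inE evu evw eq_sym uw; lia.
Qed.

Lemma deg2_other_nbr v u : deg e v = 2 -> e v u -> exists2 w, e v w & u <> w.
Proof.
rewrite /deg (cardsD1 u) inE => + evu; rewrite evu add1n => -[] /eqP /cards1P [w Nw].
have : w \in [set y | e v y] :\ u by rewrite Nw set11.
by rewrite !inE => /andP [/eqP wu evw]; exists w => // /esym.
Qed.

Lemma deg2_nbr_uniq v u w z : deg e v = 2 -> e v u -> e v w -> e v z ->
  u != w -> z != u -> z = w.
Proof.
move=> dv evu evw evz uw zu.
have N0 : #|[set y | e v y] :\ u :\ w| = 0 by have := card_nbrD2 evu evw uw; lia.
have : z \notin [set y | e v y] :\ u :\ w by rewrite (cards0_eq N0) inE.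
by rewrite !inE zu evz /= andbT negbK => /eqP.
Qed.

Lemma source_third_nbr v u w : 2 < deg e v -> exists y, [/\ e v y, y <> u & y <> w].
Proof.
rewrite /deg => dv; have : 0 < #|[set y | e v y] :\ u :\ w|.
  have := cardsD1 u [set y | e v y]; have := cardsD1 w ([set y | e v y] :\ u).
  by move: (u \in _) (w \in _) => [] [] /=; lia.
by case/card_gt0P => y; rewrite !inE => /and3P [/eqP yw /eqP yu evy]; exists y.
Qed.

Lemma rayP r a : is_ray e r a <-> [/\ gpath e r a, 0 < a, 2 < deg e (r 0),
  deg e (r a) = 1 & forall j, 0 < j -> j < a -> deg e (r j) = 2].
Proof.
split=> [|[g a0 dr0 dra inner]].
  case/and3P => /and5P [g a0 _ _ /forallP inner] src /eqP dra; split => // j j0 ja.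
  by move: (inner (Ordinal ja)) => /implyP /(_ j0) /eqP.
apply/and3P; split; rewrite /is_source ?dra //; apply/and5P; split => //.
- by rewrite neq_ltn dr0 orbT.
- by rewrite dra.
- by apply/forallP => j; apply/implyP => j0; rewrite inner.
Qed.

Lemma gpath_deg2_agree x nx y ny m : gpath e x nx -> gpath e y ny ->
  x 0 = y 0 -> x 1 = y 1 -> m <= nx -> m <= ny ->
  (forall j, 0 < j -> j < m -> deg e (x j) = 2) ->
  forall j, j <= m -> x j = y j.
Proof.
move=> gx gy xy0 xy1 mx my inner.
have agree j : j < m -> x j = y j /\ x j.+1 = y j.+1.
  elim: j => [//|j IH] jm; have [xyj xyj1] := IH (ltnW jm); split => //.
  have ex_prev : e (x j.+1) (x j) by rewrite e_sym (gpath_edge gx) //; lia.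
  have ex_next : e (x j.+1) (x j.+2) by rewrite (gpath_edge gx) //; lia.
  have ey_next : e (x j.+1) (y j.+2) by rewrite xyj1 (gpath_edge gy) //; lia.
  symmetry; apply: (deg2_nbr_uniq (inner j.+1 isT jm) ex_prev ex_next ey_next).
    by apply/eqP => /(gpath_inj gx); lia.
  by rewrite xyj; apply/eqP => /(gpath_inj gy); lia.
by case=> [//|j] jm; have [] := agree j jm.
Qed.

Lemma ray_uniq r a r' b : is_ray e r a -> is_ray e r' b ->
  r 0 = r' 0 -> r 1 = r' 1 -> a = b /\ forall j, j <= a -> r j = r' j.
Proof.
wlog ab : r a r' b / a <= b => [hw ra rb rr0 rr1|].
  case: (leqP a b) => [ab|ba]; first exact: hw.
  by have [ba' _] := hw r' b r a (ltnW ba) rb ra (esym rr0) (esym rr1); lia.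
move=> /rayP [g a0 _ dra inner] /rayP [g' _ _ _ inner'] rr0 rr1.
have agree := gpath_deg2_agree g g' rr0 rr1 (leqnn a) ab inner.
split=> //; apply/eqP; rewrite eqn_leq ab leqNgt; apply/negP => ltab.
by move: dra; rewrite agree // inner'.
Qed.

Lemma ray_stops_at_source y n m r a : gpath e y n -> 0 < m <= n ->
  2 < deg e (y m) -> (forall j, 0 < j -> j < m -> deg e (y j) = 2) ->
  is_ray e r a -> r 0 = y 0 -> r 1 <> y 1.
Proof.
move=> gy /andP [m0 mn] dym inner /rayP [g a0 _ dra inner_r] ry0 ry1.
have agree b : b <= a -> b <= m -> r b = y b.
  move=> ba bm; symmetry; apply: (gpath_deg2_agree gy g (esym ry0) (esym ry1) (m := b)).
  - exact: leq_trans bm mn.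
  - exact: ba.
  - by move=> j j0 jb; apply: inner; lia.
  - exact: leqnn.
case: (ltngtP a m) => [am|ma|am].
- by move: dra; rewrite agree ?inner //; lia.
- by move: dym; rewrite -agree ?inner_r //; lia.
- by move: dym; rewrite -am -agree ?dra //; lia.
Qed.

Lemma deg2_path_extend y n : gpath e y n -> 0 < n -> deg e (y 0) = 2 ->
  (forall j, 0 < j -> j < n -> deg e (y j) = 2) ->
  exists2 y', gpath e y' n.+1 & forall j, 0 < j -> j < n.+1 -> deg e (y' j) = 2.
Proof.
move=> g n0 dy0 inner; have [z ez y1z] := deg2_other_nbr dy0 (gpath_edge g n0).
have yz := gpath_avoid_nbr g ez y1z.
exists (fun j => if j is j'.+1 then y j' else z); last by case=> [|[|j]] //= _ jn; apply: inner.
apply: gpathP => [[|i] lt_in|[|i] [|j] le_i le_j] //=.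
- by rewrite e_sym.
- exact: gpath_edge g lt_in.
- by move/esym/yz.
- by move/yz.
- by move/(gpath_inj g) => ->.
Qed.

Lemma deg2_path_in_two_path y n : gpath e y n -> 0 < n ->
  (forall j, 0 < j -> j < n -> deg e (y j) = 2) ->
  exists z b, two_path e z b /\ n <= b.
Proof.
(* Extend at an end of degree 2 while possible; this stops since paths are shorter than #|V|. *)
move: {2}(#|V| - n) (leqnn (#|V| - n)) => K; elim: K y n => [|K IH] y n + g.
  by have := gpath_lt_card g; lia.
move=> hK n0 inner.
have extend y' : gpath e y' n -> deg e (y' 0) = 2 ->
    (forall j, 0 < j -> j < n -> deg e (y' j) = 2) ->
    exists z b, two_path e z b /\ n <= b.
  move=> g' dy'0 /(deg2_path_extend g' n0 dy'0) [y'' g'' inner''].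
  have [z [b [zb nb]]] := IH y'' n.+1 ltac:(lia) g'' isT inner''.
  by exists z, b; split => //; lia.
have [dy0|dy0] := eqVneq (deg e (y 0)) 2; first exact: extend g dy0 inner.
have [dyn|dyn] := eqVneq (deg e (y n)) 2.
  apply: (extend _ (gpath_rev g)); first by rewrite subn0.
  by move=> j j0 jn; apply: inner; lia.
exists y, n; split => //; apply/and5P; split => //.
by apply/forallP => j; apply/implyP => j0; rewrite inner.
Qed.

Variable d : nat.
Hypothesis d_longest : forall x a, two_path e x a -> a <= d.

Lemma deg2_path_le y n : gpath e y n -> 0 < n ->
  (forall j, 0 < j -> j < n -> deg e (y j) = 2) -> n <= d.
Proof.
move=> g n0 /(deg2_path_in_two_path g n0) [z [b [zb nb]]].
by have := d_longest zb; lia.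
Qed.

(* The condition [c_gadget] imposes on an inner vertex: [c_gadget e t x n] is
   convertible to [gpath e x n /\ forall i, 0 < i -> i < n -> c_vertex t x i]. *)
Definition c_vertex (t : nat) (x : nat -> V) (i : nat) : Prop :=
  deg e (x i) = 2 \/
  (is_source e (x i) /\
   forall y, e (x i) y -> y <> x i.-1 -> y <> x i.+1 ->
     exists (r : nat -> V) (a : nat),
       a <= t /\ is_ray e r a /\ r 0 = x i /\ exists m, m <= a /\ r m = y).

Lemma c_vertex_deg t x i : c_vertex t x i -> 1 < deg e (x i).
Proof. by case=> [->|[src _]] //; apply: ltnW. Qed.

Lemma c_vertex0_deg2 x i : c_vertex 0 x i -> deg e (x i) = 2.
Proof.
case=> [//|[src side]]; have [y [exy y1 y2]] := source_third_nbr (x i.-1) (x i.+1) src.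
have [r [a [a0 [_ [r0 [m [ma rm]]]]]]] := side y exy y1 y2.
by move: exy; rewrite -rm (_ : m = 0) ?r0 ?e_irr //; lia.
Qed.

Lemma c_vertex_shift t x p i :
  0 < i -> c_vertex t (fun j => x (p + j)) i <-> c_vertex t x (p + i).
Proof. by case: i => // i _; rewrite /c_vertex /= !addnS. Qed.

Lemma junction_ray t x n i : gpath e x n -> 0 < i < n ->
  c_vertex t.+1 x i -> ~ c_vertex t x i ->
  exists r, [/\ is_ray e r t.+1, r 0 = x i &
    forall m, m <= t.+1 -> r m <> x i.-1 /\ r m <> x i.+1].
Proof.
move=> g /andP [i0 iN] [d2|[src side]] not_t; first by case: not_t; left.
have [y [exy yp yn no_short]] : exists y, [/\ e (x i) y, y <> x i.-1, y <> x i.+1 &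
    ~ exists r a, a <= t /\ is_ray e r a /\ r 0 = x i /\ exists m, m <= a /\ r m = y].
  apply: NNPP => none; apply: not_t; right; split => // y exy yp yn.
  by apply: NNPP => no_ray; apply: none; exists y.
have [r [a [a_le [ra [r0 [m [ma rm]]]]]]] := side y exy yp yn.
have at1 : a = t.+1.
  apply/eqP; rewrite eqn_leq a_le leqNgt; apply/negP => a_lt.
  by apply: no_short; exists r, a; do !split => //; exists m.
subst a; have /rayP [g_r _ _ _ _] := ra.
have r1 : r 1 = y by rewrite -rm (gpath_nbr_head g_r _ ma rm) // r0.
have e_prev : e (x i) (x i.-1).
  by have := gpath_edge g (i := i.-1); rewrite prednK // e_sym; apply; lia.
exists r; split => // m' m't; split.
- by apply: (gpath_avoid_nbr g_r) => //; rewrite ?r0 ?r1.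
- by apply: (gpath_avoid_nbr g_r) => //; rewrite ?r0 ?r1 // (gpath_edge g).
Qed.

Lemma no_ray_along y n : gpath e y n -> d < n ->
  (forall j, 0 < j <= d -> 1 < deg e (y j)) ->
  forall r a, is_ray e r a -> r 0 = y 0 -> r 1 <> y 1.
Proof.
move=> g dn deg_gt1 r a ra r0.
have ex_m : exists m, (0 < m) && (deg e (y m) != 2) && (m <= d).
  apply: NNPP => none; suff : d.+1 <= d by rewrite ltnn.
  apply: (deg2_path_le (gpath_prefix g dn)) => // j j0 jd.
  by apply/eqP; apply: contraT => dj; case: none; exists j; rewrite j0 dj; lia.
have ex_m' : exists m, (0 < m) && (deg e (y m) != 2).
  by have [m /andP [+ _]] := ex_m; exists m.
case: (ex_minnP ex_m') => m /andP [m0 dm] min_m.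
have md : m <= d by have [j /andP [/min_m ? ?]] := ex_m; lia.
apply: (ray_stops_at_source (m := m) g _ _ _ ra r0).
- by rewrite m0; lia.
- by have := deg_gt1 m ltac:(lia); lia.
- move=> j j0 jm; apply/eqP; apply: contraT => dj.
  by have := min_m j; rewrite j0 dj => /(_ isT); lia.
Qed.

Lemma sum_degL_add2_le s u w : e s u -> e s w -> u != w ->
  (forall r a, is_ray e r a -> r 0 = s -> r 1 <> u /\ r 1 <> w) ->
  \sum_(a < #|V|) degL e s a + 2 <= deg e s.
Proof.
move=> esu esw uw not_along.
pose F a := [set tfun t 1 | t in
  [set t : a.+1.-tuple V | is_ray e (tfun t) a && (tfun t 0 == s)]].
have card_F a : #|F a| = degL e s a.
  rewrite card_in_imset // => t t'; rewrite !inE.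
  move=> /andP [ra /eqP r0] /andP [ra' /eqP r0'] rr1.
  have [_ agree] := ray_uniq ra ra' (etrans r0 (esym r0')) rr1.
  exact: eq_from_tfun.
have disj_F a b : a != b -> [disjoint F a & F b].
  move=> ab; rewrite -setI_eq0; apply/eqP/setP => z; rewrite !inE.
  apply/negP => /andP [/imsetP [t]]; rewrite inE => /andP [ra /eqP r0] -> /imsetP [t'].
  rewrite inE => /andP [ra' /eqP r0'] rr1.
  have [eq_ab _] := ray_uniq ra ra' (etrans r0 (esym r0')) rr1.
  by move: ab; rewrite eq_ab eqxx.
have F_sub : \bigcup_(a < #|V|) F a \subset [set y | e s y] :\ u :\ w.
  apply/bigcupsP => a _; apply/subsetP => z /imsetP [t].
  rewrite inE => /andP [ra /eqP r0] ->; have /rayP [g a0 _ _ _] := ra.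
  have [ru rw] := not_along _ _ ra r0.
  by rewrite !inE -r0 (gpath_edge g a0) andbT; apply/andP; split; apply/eqP.
rewrite -(card_nbrD2 esu esw uw) leq_add2r.
have <- : \sum_(a < #|V|) #|F a| = \sum_(a < #|V|) degL e s a.
  by apply: eq_bigr => a _; rewrite card_F.
by rewrite -card_bigcup_ord_disjoint // subset_leq_card.
Qed.

Lemma no_fork y n i : gpath e y n -> (forall j, 0 < j < n -> 1 < deg e (y j)) ->
  d < i -> i + d < n -> ~ is_fork e (y i).
Proof.
move=> g deg_gt1 di idn [_ [one_branch _]].
have fwd r a : is_ray e r a -> r 0 = y i -> r 1 <> y i.+1.
  move=> ra r0; have g_fwd := gpath_shift g (p := i) (m := n - i) ltac:(lia).
  have := no_ray_along g_fwd ltac:(lia) _ ra; rewrite addn0 addn1; apply => //.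
  by move=> j j0; apply: deg_gt1; lia.
have bwd r a : is_ray e r a -> r 0 = y i -> r 1 <> y i.-1.
  move=> ra r0; have g_bwd := gpath_rev (gpath_prefix g (m := i) ltac:(lia)).
  have := no_ray_along g_bwd di _ ra; rewrite subn0 subn1; apply => //.
  by move=> j j0; apply: deg_gt1; lia.
have e_prev : e (y i) (y i.-1).
  have i0 : 0 < i by lia.
  by have := gpath_edge g (i := i.-1); rewrite prednK // e_sym; apply; lia.
have e_next : e (y i) (y i.+1) by apply: (gpath_edge g); lia.
have prev_next : y i.-1 != y i.+1 by apply/eqP => /(gpath_inj g); lia.
have := sum_degL_add2_le e_prev e_next prev_next
  (fun r a ra r0 => conj (bwd r a ra r0) (fwd r a ra r0)).
by rewrite /degLbar in one_branch; lia.
Qed.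

Lemma c_gadget0_le y n : c_gadget e 0 y n -> n <= d.
Proof.
case: n => [//|n] [g inner]; apply: (deg2_path_le g) => // j j0 jn.
exact: c_vertex0_deg2 (inner j j0 jn).
Qed.

Lemma c_gadget_window t y n q m : gpath e y n -> q + m <= n ->
  (forall i, q < i < q + m -> c_vertex t y i) ->
  c_gadget e t (fun i => y (q + i)) m.
Proof.
move=> g qmn inner; split; first exact: gpath_shift g qmn.
by move=> i i0 im; apply/c_vertex_shift => //; apply: inner; lia.
Qed.

Lemma closed_strong_of_junctions t y n k idx :
  t < d -> 0 < k -> c_gadget e t.+1 y n ->
  idx 0 = 0 -> idx k.+1 = n -> (forall l, l <= k -> idx l + 2 * d < idx l.+1) ->
  (forall l, 0 < l <= k -> ~ c_vertex t y (idx l)) ->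
  closed_strong_c_gadget e t.+1 y n k idx.
Proof.
move=> td k0 [g inner] idx0 idxk gap not_t.
have idx_mono l l' : l <= l' <= k.+1 -> idx l <= idx l'.
  elim: l' => [|l' IH] /andP [ll' l'k]; first by move: ll'; rewrite leqn0 => /eqP ->.
  case: (ltngtP l l'.+1) ll' => // [ll' _|-> //].
  by have := gap l' l'k; have := IH ltac:(lia); lia.
have idx_in l : 0 < l <= k -> 2 * d < idx l /\ idx l + 2 * d < n.
  move=> /andP [l0 lk]; have := idx_mono 1 l; have := idx_mono l k; have := gap k.
  by have := gap 0; rewrite idx0 idxk; lia.
have deg_gt1 j : 0 < j < n -> 1 < deg e (y j).
  by case/andP => j0 jn; exact: c_vertex_deg (inner j j0 jn).
split; first split; [by [] | do 3!split => // | split].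
- by move=> l lk; have := gap l lk; lia.
- move=> l l1 lk; have [lo hi] := idx_in l ltac:(lia).
  have l_in : 0 < idx l < n by lia.
  have [r [ra r0 avoid]] := junction_ray g l_in
    (inner (idx l) ltac:(lia) ltac:(lia)) (not_t l ltac:(lia)).
  by exists r.
- by apply: (no_fork g deg_gt1); have := idx_in 1 ltac:(lia); lia.
- by apply: (no_fork g deg_gt1); have := idx_in k ltac:(lia); lia.
Qed.

Lemma closed_strong_of_c_gadget k t y n :
  0 < k -> t <= d -> gadget_length d k t <= n -> c_gadget e t y n ->
  exists d' : nat, 1 <= d' /\ d' <= d /\
    exists (x : nat -> V) (L' k' : nat) (idx : nat -> nat),
      k <= k' /\ closed_strong_c_gadget e d' x L' k' idx.
Proof.
move=> k0; elim: t y n => [|t IH] y n td len_n gy.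
  by have := c_gadget0_le gy; rewrite /= in len_n; lia.
rewrite /= -/(gadget_length d k t) in len_n; set M := gadget_length d k t in len_n.
have [[q qn gq]|no_window] :=
  classic (exists2 q, q + M <= n & c_gadget e t (fun i => y (q + i)) M).
  exact: IH _ _ (ltnW td) (leqnn M) gq.
have hits q : q + M <= n -> exists2 i, q < i < q + M & ~ c_vertex t y i.
  move=> qn; apply: NNPP => none; apply: no_window; exists q => //.
  apply: c_gadget_window gy.1 qn _ => i qi.
  by apply: NNPP => not_t; apply: none; exists i.
have [idx [idx0 idxk gap not_t]] := spaced_hits (gadget_length_gt0 d k t) len_n hits.
exists t.+1; split => //; split => //; exists y, n, k, idx; split => //.
exact: closed_strong_of_junctions.
Qed.

End Tree.

Theorem corollary35 :
  forall d k : nat, 1 <= d -> 0 < k ->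
  exists L : nat, 0 < L /\
    forall (V : finType) (e : rel V),
      is_tree e -> longest_2path e d ->
      (exists x : nat -> V, c_gadget e d x L) ->
      exists d' : nat, 1 <= d' /\ d' <= d /\
        exists (x : nat -> V) (L' k' : nat) (idx : nat -> nat),
          k <= k' /\ closed_strong_c_gadget e d' x L' k' idx.
Proof.
move=> d k _ k0; exists (gadget_length d k d); split; first exact: gadget_length_gt0.
move=> V e [e_sym [e_irr [_ e_acyc]]] [_ d_longest] [x gx].
exact: (closed_strong_of_c_gadget e_sym e_irr e_acyc d_longest k0 (leqnn d) (leqnn _) gx).
Qed.
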